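(* Let $0<\rho<\frac{\pi}{6}$, set $\theta_1=0$, $\theta_2=\frac{\pi}{2}+\rho$, $T_1=[\theta_2,\pi]$ and $T_2=[2\rho,\frac{\pi}{2}-\rho]$, and for $p>0$ define $\Delta_p(\theta)=|\cos(\theta-\theta_2)|^p+|\cos(\theta-\theta_1)|^p$. Then: (a) For all $0<p\le 2$ and all $\theta\in T_1$, $\Delta_p(\theta)\ge 1$. (b) For all $0<p\le\frac{\log 3}{\log 2}$ and all $\theta_i\in T_1$, $\theta_j\in T_2$, $\Delta_p(\theta_i)+\Delta_p(\theta_j)\ge 2$. *)

From Stdlib Require Import Reals.
Open Scope R_scope.

(* x^p for x >= 0 and real exponent p > 0, with the convention 0^p = 0. *)
Definition rpow (x p : R) : R := if Req_EM_T x 0 then 0 else Rpower x p.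

Definition theta1 : R := 0.
Definition theta2 (rho : R) : R := PI / 2 + rho.

Definition Deltap (rho p theta : R) : R :=
  rpow (Rabs (cos (theta - theta2 rho))) p + rpow (Rabs (cos (theta - theta1))) p.

From Stdlib Require Import Reals Lra Psatz.
From Coquelicot Require Import Coquelicot.
Open Scope R_scope.

(* For [theta] in [T1] the two cosines [A], [B] lie in [[sin rho, 1]] and satisfy
   [A^2 + B^2 >= 1 + sin^2 rho].  As [t |-> t^(p/2)] is concave for [p <= 2], this gives
   [Delta_p >= A^2 + B^2 >= 1], and by majorization [Delta_p >= 1 + sin^p rho].
   For [theta] in [T2], [Delta_p theta = sin^p a + sin^p b] with [a + b + rho = PI/2], so (b)
   reduces to [sin^p a + sin^p b + sin^p c >= 1] whenever [a, b, c > 0] sum to [PI/2].  It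
   suffices to take the largest exponent [p = log2 3], for which [a = b = c = PI/6] is an
   equality case.  There [sin^p] is convex on [(0, PI/6]], which reduces the claim to two
   equal small angles, i.e. to [(1 - 2 s^2)^p + 2 s^p >= 1] for [0 < s <= 1/2]; this follows
   from lower bounds [x^p >= x^2 / (tangent line of x^(2-p))] and polynomial estimates. *)

Lemma Rpower_1_base (p : R) : Rpower 1 p = 1.
Proof. unfold Rpower. rewrite ln_1, Rmult_0_r. apply exp_0. Qed.

Lemma Rpower_sq (x : R) : 0 < x -> Rpower x 2 = x ^ 2.
Proof. intros Hx. replace 2 with (INR 2) by (simpl; lra). now apply Rpower_pow. Qed.

Lemma Rpower_sq_half (x p : R) : 0 < x -> Rpower x p = Rpower (x ^ 2) (p / 2).
Proof. intros Hx. rewrite <- Rpower_sq, Rpower_mult by exact Hx. f_equal. field. Qed.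

Lemma Rpower_gt_0 (x p : R) : 0 < Rpower x p.
Proof. apply exp_pos. Qed.

Lemma Rle_Rpower_base_le_1 (x p q : R) : 0 < x <= 1 -> p <= q -> Rpower x q <= Rpower x p.
Proof.
  intros Hx Hpq. unfold Rpower.
  assert (Hln : ln x <= 0) by (rewrite <- ln_1; apply ln_le; lra).
  assert (H : q * ln x <= p * ln x) by nra.
  destruct (Rle_lt_or_eq_dec _ _ H) as [Hlt|Heq].
  - now apply Rlt_le, exp_increasing.
  - rewrite Heq. lra.
Qed.

Lemma Rpower_le_tangent_at_1 (y q : R) : 0 < y -> 0 <= q <= 1 -> Rpower y q <= 1 + q * (y - 1).
Proof.
  intros Hy Hq. unfold Rpower. set (L := ln y).
  (* A convex combination of [1 + t <= exp t] at t = (1 - q) L and t = - q L. *)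
  assert (E1 := exp_ineq1_le ((1 - q) * L)).
  assert (E2 := exp_ineq1_le (- (q * L))).
  assert (Hy' : exp ((1 - q) * L) * exp (q * L) = y).
  { rewrite <- exp_plus. replace ((1 - q) * L + q * L) with L by ring. now apply exp_ln. }
  assert (H1 : exp (- (q * L)) * exp (q * L) = 1).
  { rewrite <- exp_plus. replace (- (q * L) + q * L) with 0 by ring. apply exp_0. }
  assert (P := exp_pos (q * L)).
  assert (0 <= q * (exp ((1 - q) * L) - (1 + (1 - q) * L)) * exp (q * L)).
  { apply Rmult_le_pos; [apply Rmult_le_pos|]; lra. }
  assert (0 <= (1 - q) * (exp (- (q * L)) - (1 + - (q * L))) * exp (q * L)).
  { apply Rmult_le_pos; [apply Rmult_le_pos|]; lra. }
  rewrite <- Hy'. nra.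
Qed.

Lemma sq_le_tangent_Rpower (x y p : R) : 0 < x -> 0 < y -> 1 <= p <= 2 ->
  x ^ 2 <= Rpower y (2 - p) * (1 + (2 - p) * (x / y - 1)) * Rpower x p.
Proof.
  intros Hx Hy Hp.
  assert (Hxy : 0 < x / y) by (apply Rdiv_lt_0_compat; lra).
  assert (Hsplit : x ^ 2 = Rpower y (2 - p) * Rpower (x / y) (2 - p) * Rpower x p).
  { rewrite Rpower_mult_distr by lra.
    replace (y * (x / y)) with x by (field; lra).
    rewrite <- Rpower_plus. replace (2 - p + p) with 2 by ring.
    now rewrite Rpower_sq. }
  rewrite Hsplit.
  assert (Ht := Rpower_le_tangent_at_1 (x / y) (2 - p) Hxy ltac:(lra)).
  pose proof (Rpower_gt_0 y (2 - p)). pose proof (Rpower_gt_0 x p).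
  apply Rmult_le_compat_r; [lra|]. apply Rmult_le_compat_l; lra.
Qed.

(* [t ^ q] lies above its chord on [[m, 1]]. *)
Lemma Rpower_above_chord (X m q : R) : 0 < m <= X -> X <= 1 -> 0 <= q <= 1 ->
  (X - m) + (1 - X) * Rpower m q <= (1 - m) * Rpower X q.
Proof.
  intros Hm HX Hq. set (g := Rpower X q).
  assert (Hg : 0 < g) by apply Rpower_gt_0.
  assert (Hm' : 0 < m / X) by (apply Rdiv_lt_0_compat; lra).
  assert (HX' : 0 < 1 / X) by (apply Rdiv_lt_0_compat; lra).
  assert (T1 : 1 <= g * (1 + q * (1 / X - 1))).
  { replace 1 with (Rpower (1 / X) q * g) at 1.
    - rewrite (Rmult_comm _ g). apply Rmult_le_compat_l; [lra|].
      now apply Rpower_le_tangent_at_1.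
    - unfold g. rewrite Rpower_mult_distr by lra.
      replace (1 / X * X) with 1 by (field; lra). apply Rpower_1_base. }
  assert (Tm : Rpower m q <= g * (1 + q * (m / X - 1))).
  { replace (Rpower m q) with (Rpower (m / X) q * g).
    - rewrite (Rmult_comm _ g). apply Rmult_le_compat_l; [lra|].
      now apply Rpower_le_tangent_at_1.
    - unfold g. rewrite Rpower_mult_distr by lra. f_equal. field. lra. }
  assert (Hid : (X - m) * (1 + q * (1 / X - 1)) + (1 - X) * (1 + q * (m / X - 1)) = 1 - m)
    by (field; lra).
  assert ((X - m) * 1 <= (X - m) * (g * (1 + q * (1 / X - 1))))
    by (apply Rmult_le_compat_l; lra).
  assert ((1 - X) * Rpower m q <= (1 - X) * (g * (1 + q * (m / X - 1))))
    by (apply Rmult_le_compat_l; lra).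
  rewrite <- Hid. nra.
Qed.

Lemma Rpower_pair_majorization (X Y m q : R) :
  0 < m <= X -> X <= 1 -> m <= Y -> Y <= 1 -> 1 + m <= X + Y -> 0 <= q <= 1 ->
  1 + Rpower m q <= Rpower X q + Rpower Y q.
Proof.
  intros HmX HX HmY HY Hsum Hq.
  destruct (Req_dec m 1) as [->|Hm1].
  { assert (X = 1) as -> by lra. assert (Y = 1) as -> by lra. rewrite Rpower_1_base. lra. }
  assert (CX := Rpower_above_chord X m q HmX HX Hq).
  assert (CY := Rpower_above_chord Y m q ltac:(lra) HY Hq).
  assert (Hgm : Rpower m q <= 1).
  { rewrite <- (Rpower_O m) by lra. apply Rle_Rpower_base_le_1; lra. }
  assert (0 <= (X + Y - 1 - m) * (1 - Rpower m q)) by (apply Rmult_le_pos; lra).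
  apply Rmult_le_reg_l with (1 - m); nra.
Qed.

Definition log2_3 : R := ln 3 / ln 2.

Lemma ln2_gt_0 : 0 < ln 2.
Proof. rewrite <- ln_1. apply ln_increasing; lra. Qed.

Lemma Rpower_2_log2_3 : Rpower 2 log2_3 = 3.
Proof.
  unfold Rpower, log2_3. pose proof ln2_gt_0.
  replace (ln 3 / ln 2 * ln 2) with (ln 3) by (field; lra). apply exp_ln; lra.
Qed.

Lemma Rpower_half_log2_3 : Rpower (1 / 2) log2_3 = 1 / 3.
Proof.
  assert (H := Rpower_mult_distr (1 / 2) 2 log2_3 ltac:(lra) ltac:(lra)).
  replace (1 / 2 * 2) with 1 in H by field.
  rewrite Rpower_1_base, Rpower_2_log2_3 in H. lra.
Qed.

Lemma Rpower_half_2_minus_log2_3 : Rpower (1 / 2) (2 - log2_3) = 3 / 4.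
Proof.
  unfold Rminus. rewrite Rpower_plus, Rpower_Ropp, Rpower_half_log2_3, Rpower_sq by lra.
  field.
Qed.

Lemma log2_3_bounds : 15849 / 10000 <= log2_3 <= 1585 / 1000.
Proof.
  pose proof ln2_gt_0.
  assert (L1 : ln (2 ^ 84) <= ln (3 ^ 53)).
  { apply ln_le; [apply pow_lt; lra|]. rewrite !pow_IZR. apply IZR_le. now vm_compute. }
  assert (L2 : ln (3 ^ 200) <= ln (2 ^ 317)).
  { apply ln_le; [apply pow_lt; lra|]. rewrite !pow_IZR. apply IZR_le. now vm_compute. }
  rewrite !ln_pow, !INR_IZR_INZ in L1, L2 by lra. simpl in L1, L2.
  unfold log2_3. split; apply Rmult_le_reg_r with (ln 2); auto;
    replace (ln 3 / ln 2 * ln 2) with (ln 3) by (field; lra); lra.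
Qed.

Lemma sq_le_tangent_at_1_log2_3 (x : R) : 0 < x ->
  x ^ 2 <= (1 + (2 - log2_3) * (x - 1)) * Rpower x log2_3.
Proof.
  intros Hx. pose proof log2_3_bounds as Hp.
  assert (Ht := sq_le_tangent_Rpower x 1 log2_3 Hx ltac:(lra) ltac:(lra)).
  now rewrite Rpower_1_base, Rmult_1_l, Rdiv_1_r in Ht.
Qed.

Lemma sq_le_tangent_at_half_log2_3 (x : R) : 0 < x ->
  4 * x ^ 2 <= 3 * (1 + (2 - log2_3) * (2 * x - 1)) * Rpower x log2_3.
Proof.
  intros Hx. pose proof log2_3_bounds as Hp.
  assert (Ht := sq_le_tangent_Rpower x (1 / 2) log2_3 Hx ltac:(lra) ltac:(lra)).
  rewrite Rpower_half_2_minus_log2_3 in Ht.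
  replace (x / (1 / 2)) with (2 * x) in Ht by field. lra.
Qed.

(* Bounding each coefficient with the range of [r] leaves a cubic in [S] that
   decreases on [0, 37/100] and is positive at [37/100]. *)
Lemma small_S_poly_nonneg (S r : R) : 0 <= S <= 37/100 -> 415/1000 <= r <= 4151/10000 ->
  0 <= -4 + 18*r - 6*r^2 - 24*S*r + 12*S*r^2 + 12*S^2 - 28*S^2*r + 24*S^3*r.
Proof.
  intros HS Hr.
  assert (h0 : -4 + 18*r - 6*r^2 >= 24366/10000) by nra.
  assert (h1 : S * (- 24*r + 12*r^2) >= S * (-7895/1000))
    by (apply Rmult_ge_compat_l; nra).
  assert (h2 : S^2 * (12 - 28*r) >= S^2 * (377/1000))
    by (apply Rmult_ge_compat_l; [apply Rle_ge, pow2_ge_0 | lra]).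
  assert (h3 : S^3 * (24 * r) >= S^3 * (996/100))
    by (apply Rmult_ge_compat_l; [apply Rle_ge, pow_le; lra | lra]).
  assert (Hslope : -7895/1000 + 377/1000*(S+37/100) + 996/100*(S^2 + 37/100*S + (37/100)^2) <= 0)
    by nra.
  assert (0 <= (37/100 - S) * - (-7895/1000 + 377/1000*(S+37/100)
                                  + 996/100*(S^2 + 37/100*S + (37/100)^2))) by nra.
  nra.
Qed.

(* As above, with the cubic now increasing on [37/100, 1/2]. *)
Lemma large_S_poly_nonneg (S r : R) : 37/100 <= S <= 1/2 -> 415/1000 <= r <= 4151/10000 ->
  0 <= 1 - 4*r + 3*r^2 + S*(4 - 14*r + 6*r^2) + S^2*(4 - 4*r) + 8*r*S^3.
Proof.
  intros HS Hr.
  assert (h0 : 1 - 4*r + 3*r^2 >= -1435/10000) by nra.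
  assert (h1 : S * (4 - 14*r + 6*r^2) >= S * (-7776/10000))
    by (apply Rmult_ge_compat_l; nra).
  assert (h2 : S^2 * (4 - 4*r) >= S^2 * (23396/10000))
    by (apply Rmult_ge_compat_l; [apply Rle_ge, pow2_ge_0 | lra]).
  assert (h3 : S^3 * (8*r) >= S^3 * (332/100))
    by (apply Rmult_ge_compat_l; [apply Rle_ge, pow_le; lra | lra]).
  assert (Hslope : -7776/10000 + 23396/10000*(S+37/100) + 332/100*(S^2 + 37/100*S + (37/100)^2) >= 0)
    by nra.
  assert (0 <= (S - 37/100) * (-7776/10000 + 23396/10000*(S+37/100)
                               + 332/100*(S^2 + 37/100*S + (37/100)^2))) by nra.
  nra.
Qed.

Lemma sum_ge_1_of_fraction_bounds (n1 d1 n2 d2 W Z : R) : 0 < d1 -> 0 < d2 ->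
  n1 <= d1 * W -> n2 <= d2 * Z -> d1 * d2 <= n1 * d2 + n2 * d1 -> 1 <= W + Z.
Proof.
  intros Hd1 Hd2 HW HZ Hn.
  apply Rmult_le_reg_l with (d1 * d2); [nra|]. nra.
Qed.

(* Both powers are bounded below through [sq_le_tangent_Rpower], at [y = 1/2] (resp. [y = 1]
   for [1 - 2 S^2] when [S] is small); clearing denominators leaves [S^2], resp. [(2S - 1)^2],
   times the polynomials above. *)
Lemma Rpower_log2_3_double_angle (S : R) : 0 < S <= 1/2 ->
  1 <= Rpower (1 - 2 * S ^ 2) log2_3 + 2 * Rpower S log2_3.
Proof.
  intros HS. pose proof log2_3_bounds. set (r := 2 - log2_3).
  assert (Hr : 415/1000 <= r <= 4151/10000) by (unfold r; lra).
  set (w := 1 - 2 * S ^ 2).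
  assert (Hw : 1/2 <= w < 1) by (unfold w; nra).
  assert (HZ := sq_le_tangent_at_half_log2_3 S ltac:(lra)). fold r in HZ.
  assert (HZ' : 8 * S ^ 2 <= 3 * (1 + r * (2 * S - 1)) * (2 * Rpower S log2_3)) by lra.
  assert (Hd2 : 0 < 3 * (1 + r * (2 * S - 1))) by nra.
  destruct (Rle_lt_dec S (37/100)) as [Hsmall|Hlarge].
  - assert (HW := sq_le_tangent_at_1_log2_3 w ltac:(lra)). fold r in HW.
    apply (sum_ge_1_of_fraction_bounds (w ^ 2) (1 + r * (w - 1)) (8 * S ^ 2)
             (3 * (1 + r * (2 * S - 1)))); [nra | exact Hd2 | exact HW | exact HZ' |].
    assert (P := small_S_poly_nonneg S r ltac:(lra) Hr).
    assert (0 <= S ^ 2 * (-4 + 18*r - 6*r^2 - 24*S*r + 12*S*r^2 + 12*S^2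
                          - 28*S^2*r + 24*S^3*r)) by (apply Rmult_le_pos; nra).
    unfold w. nra.
  - assert (HW := sq_le_tangent_at_half_log2_3 w ltac:(lra)). fold r in HW.
    apply (sum_ge_1_of_fraction_bounds (4 * w ^ 2) (3 * (1 + r * (2 * w - 1))) (8 * S ^ 2)
             (3 * (1 + r * (2 * S - 1)))); [nra | exact Hd2 | exact HW | exact HZ' |].
    assert (P := large_S_poly_nonneg S r ltac:(lra) Hr).
    assert (0 <= (2*S - 1) ^ 2 * (1 - 4*r + 3*r^2 + S*(4 - 14*r + 6*r^2)
                                 + S^2*(4 - 4*r) + 8*r*S^3)) by (apply Rmult_le_pos; nra).
    unfold w. nra.
Qed.

Section MonotoneDerivative.

Variables (f df : R -> R) (a b : R).
Hypothesis f_derive : forall x, a <= x <= b -> is_derive f x (df x).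
Hypothesis df_incr : forall x y, a <= x -> x <= y -> y <= b -> df x <= df y.

Lemma MVT_in_interval (u v : R) : a <= u <= v -> v <= b ->
  exists c, u <= c <= v /\ f v - f u = df c * (v - u).
Proof.
  intros Huv Hvb.
  destruct (MVT_gen f u v df) as [c [Hc E]];
    rewrite ?Rmin_left, ?Rmax_right in * by lra.
  - intros x Hx. apply f_derive. lra.
  - intros x Hx. apply derivable_continuous_pt. exists (df x).
    apply is_derive_Reals, f_derive. lra.
  - now exists c.
Qed.

Lemma slope_incr (u v w : R) : a <= u <= v -> v <= w <= b ->
  (f v - f u) * (w - v) <= (f w - f v) * (v - u).
Proof.
  intros Huv Hvw.
  destruct (MVT_in_interval u v) as [c1 [Hc1 E1]]; [lra | lra |].
  destruct (MVT_in_interval v w) as [c2 [Hc2 E2]]; [lra | lra |].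
  assert (df c1 <= df c2) by (apply df_incr; lra).
  rewrite E1, E2. assert (0 <= (v - u) * (w - v)) by nra. nra.
Qed.

Lemma midpoint_convex (u w : R) : a <= u <= w -> w <= b ->
  2 * f ((u + w) / 2) <= f u + f w.
Proof.
  intros Hu Hw. assert (H := slope_incr u ((u + w) / 2) w ltac:(lra) ltac:(lra)).
  destruct (Req_dec u w) as [->|Huw].
  - replace ((w + w) / 2) with w by field. lra.
  - replace (w - (u + w) / 2) with ((u + w) / 2 - u) in H by field.
    apply Rmult_le_reg_r with ((u + w) / 2 - u); [lra|]. nra.
Qed.

Lemma slope_to_right_end_incr (u v w : R) : a <= u <= v -> v <= w <= b ->
  (f w - f u) * (w - v) <= (f w - f v) * (w - u).
Proof.
  intros Huv Hvw. assert (H := slope_incr u v w Huv Hvw).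
  replace (f w - f u) with ((f w - f v) + (f v - f u)) by ring. nra.
Qed.

End MonotoneDerivative.

Definition sinp (x : R) : R := Rpower (sin x) log2_3.
Definition sinp' (x : R) : R := log2_3 * cos x * Rpower (sin x) (log2_3 - 1).

Lemma is_derive_sinp (x : R) : 0 < sin x -> is_derive sinp x (sinp' x).
Proof.
  intros Hx. unfold sinp, sinp', Rpower.
  auto_derive; [exact Hx|].
  replace ((log2_3 - 1) * ln (sin x)) with (log2_3 * ln (sin x) + - ln (sin x)) by ring.
  rewrite exp_plus, exp_Ropp, exp_ln by exact Hx. field. lra.
Qed.

Lemma sin_gt_0_small (x : R) : 0 < x <= PI / 6 -> 0 < sin x.
Proof. intros Hx. pose proof PI_RGT_0. apply sin_gt_0; lra. Qed.

Lemma sin_le_half (x : R) : 0 < x <= PI / 6 -> sin x <= 1 / 2.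
Proof. intros Hx. pose proof PI_RGT_0. rewrite <- sin_PI6. apply sin_incr_1; lra. Qed.

(* [s (1 - s^2)] increases for [s <= 1/2]. *)
Lemma cos_sq_sin_incr (x y : R) : 0 < x <= y -> y <= PI / 6 ->
  cos x ^ 2 * sin x <= cos y ^ 2 * sin y.
Proof.
  intros Hxy Hy. pose proof PI_RGT_0.
  assert (Hsx := sin_gt_0_small x ltac:(lra)).
  assert (Hsy := sin_le_half y ltac:(lra)).
  assert (Hxy' : sin x <= sin y) by (apply sin_incr_1; lra).
  assert (Ex := sin2_cos2 x). assert (Ey := sin2_cos2 y). unfold Rsqr in Ex, Ey.
  assert (0 <= (sin y - sin x) * (1 - sin x ^ 2 - sin x * sin y - sin y ^ 2))
    by (apply Rmult_le_pos; nra).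
  nra.
Qed.

(* [sinp'^2 = log2_3^2 (cos^2 sin) sin^(2 log2_3 - 3)] is a product of increasing factors. *)
Lemma sinp'_incr (x y : R) : 0 < x -> x <= y -> y <= PI / 6 -> sinp' x <= sinp' y.
Proof.
  intros Hx Hxy Hy. pose proof PI_RGT_0. pose proof log2_3_bounds.
  assert (Hsx := sin_gt_0_small x ltac:(lra)).
  assert (Hsxy : sin x <= sin y) by (apply sin_incr_1; lra).
  assert (Hcx : 0 < cos x) by (apply cos_gt_0; lra).
  assert (Hcy : 0 < cos y) by (apply cos_gt_0; lra).
  assert (Hsq : forall z, 0 < sin z ->
            sinp' z ^ 2 = log2_3 ^ 2 * (cos z ^ 2 * sin z) * Rpower (sin z) (2 * log2_3 - 3)).
  { intros z Hz.
    assert (E : Rpower (sin z) (log2_3 - 1) ^ 2 = sin z * Rpower (sin z) (2 * log2_3 - 3)).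
    { rewrite <- Rpower_sq, Rpower_mult by apply Rpower_gt_0.
      replace ((log2_3 - 1) * 2) with (1 + (2 * log2_3 - 3)) by ring.
      now rewrite Rpower_plus, Rpower_1. }
    unfold sinp'. rewrite !Rpow_mult_distr, E. ring. }
  assert (Hcs := cos_sq_sin_incr x y ltac:(lra) Hy).
  assert (Hpow : Rpower (sin x) (2 * log2_3 - 3) <= Rpower (sin y) (2 * log2_3 - 3))
    by (apply Rle_Rpower_l; lra).
  assert (sinp' x ^ 2 <= sinp' y ^ 2).
  { rewrite !Hsq by lra.
    pose proof (Rpower_gt_0 (sin x) (2 * log2_3 - 3)).
    apply Rmult_le_compat; [| lra | | exact Hpow].
    - apply Rmult_le_pos; [apply pow2_ge_0 | apply Rmult_le_pos; [apply pow2_ge_0 | lra]].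
    - apply Rmult_le_compat_l; [apply pow2_ge_0 | exact Hcs]. }
  assert (Hpos : forall z, 0 < cos z -> 0 < sinp' z).
  { intros z Hz. apply Rmult_lt_0_compat; [apply Rmult_lt_0_compat; lra | apply Rpower_gt_0]. }
  pose proof (Hpos x Hcx). pose proof (Hpos y Hcy). nra.
Qed.

Lemma sinp_midpoint_convex (u w : R) : 0 < u <= w -> w <= PI / 6 ->
  2 * sinp ((u + w) / 2) <= sinp u + sinp w.
Proof.
  intros Hu Hw.
  apply (midpoint_convex sinp sinp' u (PI / 6)); [| intros; apply sinp'_incr | |]; try lra.
  intros x Hx. apply is_derive_sinp, sin_gt_0_small. lra.
Qed.

Lemma sinp_PI6 : sinp (PI / 6) = 1 / 3.
Proof. unfold sinp. rewrite sin_PI6. apply Rpower_half_log2_3. Qed.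

Lemma sinp_chord_to_PI6 (u v : R) : 0 < u <= v -> v <= PI / 6 ->
  (1 / 3 - sinp u) * (PI / 6 - v) <= (1 / 3 - sinp v) * (PI / 6 - u).
Proof.
  intros Hu Hv. rewrite <- sinp_PI6.
  apply (slope_to_right_end_incr sinp sinp' u (PI / 6)); [| intros; apply sinp'_incr | |];
    try lra.
  intros x Hx. apply is_derive_sinp, sin_gt_0_small. lra.
Qed.

Lemma sinp_double_angle (y : R) : 0 < y <= PI / 6 -> 1 <= sinp (PI / 2 - 2 * y) + 2 * sinp y.
Proof.
  intros Hy. unfold sinp. rewrite sin_shift, cos_2a_sin.
  replace (1 - 2 * sin y * sin y) with (1 - 2 * sin y ^ 2) by ring.
  apply Rpower_log2_3_double_angle.
  split; [apply sin_gt_0_small | apply sin_le_half]; lra.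
Qed.

Lemma sinp_sum_two_small (a b c : R) : 0 < b -> 0 < c -> a + b + c = PI / 2 ->
  b <= PI / 6 -> c <= PI / 6 -> 1 <= sinp a + sinp b + sinp c.
Proof.
  intros Hb Hc Hsum Hb6 Hc6.
  assert (Hmid : 2 * sinp ((b + c) / 2) <= sinp b + sinp c).
  { destruct (Rle_or_lt b c).
    - apply sinp_midpoint_convex; lra.
    - replace (b + c) with (c + b) by ring.
      assert (Hcb := sinp_midpoint_convex c b ltac:(lra) ltac:(lra)). lra. }
  assert (H := sinp_double_angle ((b + c) / 2) ltac:(lra)).
  replace (PI / 2 - 2 * ((b + c) / 2)) with a in H by lra. lra.
Qed.

(* Apply the double-angle inequality to [(a, (b+c)/2, (b+c)/2)] and to
   [(b, (a+c)/2, (a+c)/2)], and compare the midpoints with [c] along the chords to [PI/6]. *)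
Lemma sinp_sum_one_small (a b c : R) : 0 < c -> a + b + c = PI / 2 ->
  PI / 6 < a -> PI / 6 < b -> c <= PI / 6 -> 1 <= sinp a + sinp b + sinp c.
Proof.
  intros Hc Hsum Ha6 Hb6 Hc6.
  set (s := PI / 6) in *. set (y1 := (b + c) / 2). set (y2 := (a + c) / 2).
  assert (Ha := sinp_double_angle y1 ltac:(unfold y1, s in *; lra)).
  assert (Hb := sinp_double_angle y2 ltac:(unfold y2, s in *; lra)).
  replace (PI / 2 - 2 * y1) with a in Ha by (unfold y1; lra).
  replace (PI / 2 - 2 * y2) with b in Hb by (unfold y2; lra).
  assert (C1 := sinp_chord_to_PI6 c y1 ltac:(unfold y1; lra) ltac:(unfold y1, s in *; lra)).
  assert (C2 := sinp_chord_to_PI6 c y2 ltac:(unfold y2; lra) ltac:(unfold y2, s in *; lra)).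
  fold s in C1, C2.
  assert (Hw : 2 * (s - y1) + 2 * (s - y2) = s - c) by (unfold y1, y2, s in *; lra).
  apply Rmult_le_reg_l with (s - c); [unfold s in *; lra|]. nra.
Qed.

Lemma sinp_sum_ge_1 (a b c : R) : 0 < a -> 0 < b -> 0 < c -> a + b + c = PI / 2 ->
  1 <= sinp a + sinp b + sinp c.
Proof.
  intros Ha Hb Hc Hsum.
  destruct (Rle_or_lt b (PI / 6)) as [Hb6|Hb6]; destruct (Rle_or_lt c (PI / 6)) as [Hc6|Hc6].
  - apply sinp_sum_two_small; lra.
  - destruct (Rle_or_lt a (PI / 6)).
    + replace (sinp a + sinp b + sinp c) with (sinp c + sinp a + sinp b) by ring.
      apply sinp_sum_two_small; lra.
    + replace (sinp a + sinp b + sinp c) with (sinp a + sinp c + sinp b) by ring.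
      apply sinp_sum_one_small; lra.
  - destruct (Rle_or_lt a (PI / 6)).
    + replace (sinp a + sinp b + sinp c) with (sinp b + sinp a + sinp c) by ring.
      apply sinp_sum_two_small; lra.
    + apply sinp_sum_one_small; lra.
  - replace (sinp a + sinp b + sinp c) with (sinp b + sinp c + sinp a) by ring.
    apply sinp_sum_one_small; lra.
Qed.

(* For [theta] in [T1], write [phi = theta - PI/2 \in [rho, PI/2]]: the two cosines
   are [cos (phi - rho)] and [sin phi]. *)
Lemma cos_T1_bounds (rho theta : R) : 0 < rho -> rho < PI / 6 -> theta2 rho <= theta <= PI ->
  let A := Rabs (cos (theta - theta2 rho)) in let B := Rabs (cos (theta - theta1)) in
  sin rho <= A <= 1 /\ sin rho <= B <= 1 /\ 1 + sin rho ^ 2 <= A ^ 2 + B ^ 2.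
Proof.
  intros H0 H1 Ht A B. pose proof PI_RGT_0. unfold theta2, theta1 in *.
  set (phi := theta - PI / 2).
  assert (Hphi : rho <= phi <= PI / 2) by (unfold phi; lra).
  assert (Hsr : 0 < sin rho) by (apply sin_gt_0; lra).
  assert (HA : sin rho <= cos (phi - rho)) by (rewrite <- cos_shift; apply cos_decr_1; lra).
  assert (HB : sin rho <= sin phi) by (apply sin_incr_1; lra).
  assert (EA : A = cos (phi - rho)).
  { unfold A. replace (theta - (PI / 2 + rho)) with (phi - rho) by (unfold phi; ring).
    apply Rabs_right. lra. }
  assert (EB : B = sin phi).
  { unfold B. replace (theta - 0) with (phi + PI / 2) by (unfold phi; ring).
    rewrite cos_plus, cos_PI2, sin_PI2, Rmult_0_r, Rmult_1_r, Rminus_0_l, Rabs_Ropp.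
    apply Rabs_right. lra. }
  rewrite EA, EB.
  pose proof (COS_bound (phi - rho)). pose proof (SIN_bound phi).
  repeat split; try lra.
  rewrite cos_minus.
  assert (Hcphi : 0 <= cos phi) by (apply cos_ge_0; lra).
  assert (Hcr : 0 < cos rho) by (apply cos_gt_0; lra).
  assert (Hd : 0 <= sin (phi - rho)) by (apply sin_ge_0; lra).
  rewrite sin_minus in Hd.
  assert (E1 := sin2_cos2 phi). assert (E2 := sin2_cos2 rho). unfold Rsqr in E1, E2.
  assert (0 <= cos phi * sin rho * (sin phi * cos rho - cos phi * sin rho))
    by (apply Rmult_le_pos; [apply Rmult_le_pos|]; lra).
  nra.
Qed.

Lemma rpow_eq_Rpower (x p : R) : 0 < x -> rpow x p = Rpower x p.
Proof. intros Hx. unfold rpow. destruct (Req_EM_T x 0); [lra | reflexivity]. Qed.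

Lemma Deltap_T1_ge_1 (rho p theta : R) : 0 < rho -> rho < PI / 6 -> 0 < p <= 2 ->
  theta2 rho <= theta <= PI -> 1 <= Deltap rho p theta.
Proof.
  intros H0 H1 Hp Ht.
  destruct (cos_T1_bounds rho theta H0 H1 Ht) as [HA [HB Hsum]].
  unfold Deltap.
  set (A := Rabs (cos (theta - theta2 rho))) in *. set (B := Rabs (cos (theta - theta1))) in *.
  assert (Hsr : 0 < sin rho) by (apply sin_gt_0; pose proof PI_RGT_0; lra).
  rewrite !rpow_eq_Rpower by lra.
  assert (A ^ 2 <= Rpower A p) by (rewrite <- Rpower_sq by lra; apply Rle_Rpower_base_le_1; lra).
  assert (B ^ 2 <= Rpower B p) by (rewrite <- Rpower_sq by lra; apply Rle_Rpower_base_le_1; lra).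
  nra.
Qed.

Lemma Deltap_T1_ge (rho p theta : R) : 0 < rho -> rho < PI / 6 -> 0 < p <= 2 ->
  theta2 rho <= theta <= PI -> 1 + Rpower (sin rho) p <= Deltap rho p theta.
Proof.
  intros H0 H1 Hp Ht.
  destruct (cos_T1_bounds rho theta H0 H1 Ht) as [HA [HB Hsum]].
  unfold Deltap.
  set (A := Rabs (cos (theta - theta2 rho))) in *. set (B := Rabs (cos (theta - theta1))) in *.
  assert (Hsr : 0 < sin rho) by (apply sin_gt_0; pose proof PI_RGT_0; lra).
  rewrite !rpow_eq_Rpower by lra.
  rewrite (Rpower_sq_half A), (Rpower_sq_half B), (Rpower_sq_half (sin rho)) by lra.
  apply Rpower_pair_majorization; nra.
Qed.

Lemma Deltap_T2 (rho p theta : R) : 0 < rho -> 2 * rho <= theta <= PI / 2 - rho ->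
  Deltap rho p theta = Rpower (sin (theta - rho)) p + Rpower (sin (PI / 2 - theta)) p.
Proof.
  intros H0 Ht. pose proof PI_RGT_0. unfold Deltap, theta2, theta1.
  replace (theta - (PI / 2 + rho)) with (- (PI / 2 - (theta - rho))) by ring.
  rewrite cos_neg, cos_shift, Rminus_0_r, <- sin_shift.
  assert (0 < sin (theta - rho)) by (apply sin_gt_0; lra).
  assert (0 < sin (PI / 2 - theta)) by (apply sin_gt_0; lra).
  now rewrite !Rabs_right, !rpow_eq_Rpower by lra.
Qed.

Lemma Deltap_T2_ge (rho p theta : R) : 0 < rho -> rho < PI / 6 -> 0 < p <= log2_3 ->
  2 * rho <= theta <= PI / 2 - rho -> 1 <= Deltap rho p theta + Rpower (sin rho) p.
Proof.
  intros H0 H1 Hp Ht. pose proof PI_RGT_0.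
  assert (Hle : forall x, 0 < x < PI -> sinp x <= Rpower (sin x) p).
  { intros x Hx. apply Rle_Rpower_base_le_1; [|lra].
    split; [apply sin_gt_0; lra | apply SIN_bound]. }
  rewrite Deltap_T2 by lra.
  assert (Hs := sinp_sum_ge_1 (theta - rho) (PI / 2 - theta) rho ltac:(lra) ltac:(lra) H0
                  ltac:(ring)).
  pose proof (Hle (theta - rho) ltac:(lra)). pose proof (Hle (PI / 2 - theta) ltac:(lra)).
  pose proof (Hle rho ltac:(lra)). lra.
Qed.

Theorem lemma2p10 (rho : R) (hrho0 : 0 < rho) (hrho1 : rho < PI / 6) :
  (forall p theta, 0 < p <= 2 ->
     theta2 rho <= theta <= PI -> Deltap rho p theta >= 1) /\
  (forall p ti tj, 0 < p <= ln 3 / ln 2 ->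
     theta2 rho <= ti <= PI -> 2 * rho <= tj <= PI / 2 - rho ->
     Deltap rho p ti + Deltap rho p tj >= 2).
Proof.
  split.
  - intros p theta Hp Ht. apply Rle_ge, Deltap_T1_ge_1; assumption.
  - intros p ti tj Hp Hi Hj. change (ln 3 / ln 2) with log2_3 in Hp.
    pose proof log2_3_bounds.
    assert (Hti := Deltap_T1_ge rho p ti hrho0 hrho1 ltac:(lra) Hi).
    assert (Htj := Deltap_T2_ge rho p tj hrho0 hrho1 Hp Hj).
    lra.
Qed.
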